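(* Let $r$ denote either the max rank or the submax rank. If $\mathscr X\in\mathbb R^{I_1\times\cdots\times I_N}$ is a nonzero tensor, then there is a subtensor $\mathscr Y\in\mathbb R^{J_1\times\cdots\times J_N}$ of $\mathscr X$ such that $r(\mathscr X)=r(\mathscr Y)=J_n$ for some $n$ with $1\leq n\leq N$.
   Context: All tensors are real. For $\mathscr X\in\mathbb R^{I_1\times\cdots\times I_N}$, the mode-$n$ unfolding $\mathbf X_{(n)}$ is the $I_n\times\prod_{k\neq n}I_k$ matrix whose rows are indexed by $i_n$ and whose columns are exactly the vectors obtained from $\mathscr X$ by fixing all indices other than $i_n$; let $R_n=\operatorname{rank}(\mathbf X_{(n)})$. The max rank is $r(\mathscr X)=\max\{R_1,\dots,R_N\}$. The submax rank is $r(\mathscr X)=\operatorname{submax}\{R_1,\dots,R_N\}$, where for $N>1$ the submax of a multiset is its second largest value counted with multiplicity (e.g. $\operatorname{submax}\{1,2,3,3\}=3$), and $\operatorname{submax}\{R_1\}=R_1$ if $N=1$. A subtensor of $\mathscr X$ is a tensor $\mathscr Y\in\mathbb R^{J_1\times\cdots\times J_N}$ with $1\le J_n\le I_n$ of the form $y_{j_1\cdots j_N}=x_{i_{1j_1}\cdots i_{Nj_N}}$ for some indices $1\leq i_{n1}<\cdots<i_{nJ_n}\leq I_n$. *)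

From mathcomp Require Import all_boot all_order all_algebra.
From mathcomp Require Import reals.
Set Implicit Arguments. Unset Strict Implicit. Unset Printing Implicit Defensive.
Import Order.TTheory GRing.Theory Num.Theory.
Local Open Scope ring_scope.

Definition midx (N : nat) (I : 'I_N -> nat) := {dffun forall m : 'I_N, 'I_(I m)}.

Definition tensor (R : realType) (N : nat) (I : 'I_N -> nat) := midx I -> R.

(* Column indices of the mode-n unfolding: the indices of all modes other than n. *)
Definition cidx (N : nat) (I : 'I_N -> nat) (n : 'I_N) :=
  {dffun forall k : {k : 'I_N | k != n}, 'I_(I (val k))}.

Definition fullidx_fun (N : nat) (I : 'I_N -> nat) (n : 'I_N) (i : 'I_(I n))
    (j : cidx I n) : forall m : 'I_N, 'I_(I m) :=
  fun m => match (m =P n) with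
           | ReflectT e => eq_rect_r (fun k => 'I_(I k)) i e
           | ReflectF ne => j (exist _ m (introN eqP ne))
           end.

Definition fullidx (N : nat) (I : 'I_N -> nat) (n : 'I_N) (i : 'I_(I n))
    (j : cidx I n) : midx I := finfun (fullidx_fun i j).

(* Mode-n unfolding X_(n): rows indexed by i_n, one column per mode-n fiber
   (columns enumerated in the order of enum (cidx I n); the order is immaterial). *)
Definition unfolding (R : realType) (N : nat) (I : 'I_N -> nat) (X : tensor R I)
    (n : 'I_N) : 'M[R]_(I n, #|{: cidx I n}|) :=
  \matrix_(i < I n, c < #|{: cidx I n}|) X (fullidx i (enum_val c)).

Definition mode_rank (R : realType) (N : nat) (I : 'I_N -> nat) (X : tensor R I)
    (n : 'I_N) : nat := \rank (unfolding X n).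

Definition max_rank (R : realType) (N : nat) (I : 'I_N -> nat) (X : tensor R I) : nat :=
  \max_(n < N) mode_rank X n.

(* submax of a multiset (given as a sequence): second largest value counted with
   multiplicity; for a one-element multiset, its unique element. *)
Definition submax (s : seq nat) : nat :=
  if (size s <= 1)%N then head 0%N s else nth 0%N (sort geq s) 1.

Definition submax_rank (R : realType) (N : nat) (I : 'I_N -> nat) (X : tensor R I) : nat :=
  submax [seq mode_rank X n | n <- enum 'I_N].

Definition subtensor (R : realType) (N : nat) (I J : 'I_N -> nat) (X : tensor R I)
    (sigma : forall n : 'I_N, 'I_(J n) -> 'I_(I n)) : tensor R J :=
  fun j => X (finfun (fun m : 'I_N => sigma m (j m))).

Definition admissible (N : nat) (I J : 'I_N -> nat)
    (sigma : forall n : 'I_N, 'I_(J n) -> 'I_(I n)) : Prop :=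
  forall n : 'I_N, [/\ (0 < J n)%N, (J n <= I n)%N &
     forall a b : 'I_(J n), (a < b)%N -> (sigma n a < sigma n b)%N].

Definition has_rank_subtensor (R : realType) (N : nat) (I : 'I_N -> nat)
    (r : forall J : 'I_N -> nat, tensor R J -> nat) (X : tensor R I) : Prop :=
  exists (J : 'I_N -> nat) (sigma : forall n : 'I_N, 'I_(J n) -> 'I_(I n)),
    admissible sigma /\
    r I X = r J (subtensor X sigma) /\
    exists n : 'I_N, r J (subtensor X sigma) = J n.

From mathcomp Require Import all_boot all_order all_algebra.
From mathcomp Require Import reals.
Set Implicit Arguments. Unset Strict Implicit. Unset Printing Implicit Defensive.
Import Order.TTheory GRing.Theory Num.Theory.
Local Open Scope ring_scope.

(* Multiplying a tensor by a matrix along every mode can only lower each mode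
   rank, since its mode-m unfolding gets multiplied on both sides.  Fix a mode n,
   pick R_n rows of X_(n) spanning its row space, and let Y be the subtensor
   keeping only these slices in mode n.  Y is X multiplied by selection
   matrices, and X is Y multiplied along mode n by the matrix expressing all
   rows of X_(n) through the chosen ones; hence Y has the mode ranks of X and
   n-th dimension R_n.  The max and the submax rank are both functions of the
   mode ranks equal to some R_n, and that n does the job. *)

Section MultiIndices.
Variables (N : nat) (I : 'I_N -> nat) (n : 'I_N).

(* The branch lemmas quantify over the reflect proof [r]: destructing [n =P n]
   in place would also abstract the [eqP] hidden in [introN eqP ne]. *)
Lemma fullidx_branch_at (a : 'I_(I n)) (e : cidx I n) (b : bool)
    (r : reflect (n = n) b) :
  match r with
  | ReflectT p => eq_rect_r (fun k => 'I_(I k)) a p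
  | ReflectF ne => e (exist _ n (introN eqP ne))
  end = a.
Proof. by case: r => [p|//]; rewrite (eq_irrelevance p erefl). Qed.

Lemma fullidx_branch_off (a : 'I_(I n)) (e : cidx I n) (k : {k : 'I_N | k != n})
    (b : bool) (r : reflect (val k = n) b) :
  match r with
  | ReflectT p => eq_rect_r (fun k => 'I_(I k)) a p
  | ReflectF ne => e (exist _ (val k) (introN eqP ne))
  end = e k.
Proof.
case: r => [p|ne]; first by exfalso; move: (valP k); rewrite p eqxx.
by case: k ne => k kn ne /=; rewrite (eq_irrelevance (introN eqP ne) kn).
Qed.

Lemma fullidx_at (a : 'I_(I n)) (e : cidx I n) : fullidx a e n = a.
Proof. by rewrite ffunE; apply: fullidx_branch_at. Qed.

Lemma fullidx_off (a : 'I_(I n)) (e : cidx I n) (k : {k : 'I_N | k != n}) :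
  fullidx a e (val k) = e k.
Proof. by rewrite ffunE; apply: fullidx_branch_off. Qed.

Definition dropidx (j : midx I) : cidx I n := [ffun k => j (val k)].

Lemma dropidxK (j : midx I) : fullidx (j n) (dropidx j) = j.
Proof.
apply/ffunP => k; have [->|kn] := eqVneq k n; first by rewrite fullidx_at.
by rewrite (fullidx_off _ _ (exist _ k kn)) ffunE.
Qed.

Lemma fullidxK (a : 'I_(I n)) (e : cidx I n) : dropidx (fullidx a e) = e.
Proof. by apply/ffunP => k; rewrite ffunE fullidx_off. Qed.

Lemma big_midx (V : nmodType) (F : midx I -> V) :
  \sum_(j : midx I) F j = \sum_(a : 'I_(I n)) \sum_(e : cidx I n) F (fullidx a e).
Proof.
rewrite pair_big (reindex (fun p : _ * cidx I n => fullidx p.1 p.2)) //=.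
exists (fun j : midx I => (j n, dropidx j)) => [[a e] _|j _] /=.
  by rewrite fullidx_at fullidxK.
by rewrite dropidxK.
Qed.

End MultiIndices.

Lemma prodr_natr_forall (R : comPzSemiRingType) (T : finType) (b : pred T) :
  \prod_t (b t)%:R = [forall t, b t]%:R :> R.
Proof.
have [allb|/forallPn[t /negPf bt]] := boolP [forall t, b t].
  by rewrite big1 // => t _; rewrite (forallP allb t).
by rewrite (bigD1 t) //= bt mul0r.
Qed.

Lemma prod_neq_sig (R : comPzSemiRingType) (N : nat) (n : 'I_N) (F : 'I_N -> R) :
  \prod_(k | k != n) F k = \prod_(k : {k : 'I_N | k != n}) F (val k).
Proof.
rewrite (reindex_omap (val : {k : 'I_N | k != n} -> 'I_N) insub) => [|k kn].
  by apply: eq_bigl => -[k kn] /=; rewrite insubT ?kn /= eqxx.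
by rewrite insubT.
Qed.

Section MultilinearProduct.
Variables (R : realType) (N : nat).

Definition mlmul (I J : 'I_N -> nat) (Y : tensor R J)
    (M : forall k, 'M[R]_(I k, J k)) : tensor R I :=
  fun i => \sum_(j : midx J) (\prod_k M k (i k) (j k)) * Y j.

Lemma eq_mode_rank (I : 'I_N -> nat) (X X' : tensor R I) (m : 'I_N) :
  X =1 X' -> mode_rank X m = mode_rank X' m.
Proof. by move=> eqX; congr (\rank _); apply/matrixP => a c; rewrite !mxE eqX. Qed.

Lemma big_enum_val (V : nmodType) (T : finType) (F : T -> V) :
  \sum_(c < #|T|) F (enum_val c) = \sum_(t : T) F t.
Proof.
rewrite (reindex (@enum_rank T)) /=; last first.
  by exists enum_val => t _; rewrite ?enum_rankK ?enum_valK.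
by apply: eq_bigr => t _; rewrite enum_rankK.
Qed.

(* The mode-m unfolding of the product is [M m *m Y_(m) *m Q], where [Q] is
   the Kronecker product of the other factors, up to column order. *)
Lemma mode_rank_mlmul (I J : 'I_N -> nat) (Y : tensor R J)
    (M : forall k, 'M[R]_(I k, J k)) (m : 'I_N) :
  (mode_rank (mlmul Y M) m <= mode_rank Y m)%N.
Proof.
pose Q : 'M[R]_(#|{: cidx J m}|, #|{: cidx I m}|) := \matrix_(c, c')
  \prod_(k : {k : 'I_N | k != m})
    M (val k) ((enum_val c' : cidx I m) k) ((enum_val c : cidx J m) k).
rewrite /mode_rank; suff -> : unfolding (mlmul Y M) m = M m *m unfolding Y m *m Q.
  exact: leq_trans (mxrankM_maxl _ _) (mxrankM_maxr _ _).
apply/matrixP => a c'; rewrite !mxE /mlmul (big_midx m).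
under [RHS]eq_bigr do rewrite !mxE big_distrl /=.
rewrite [RHS]exchange_big /=; apply: eq_bigr => b _.
pose F e := M m a b * Y (fullidx b e) *
  \prod_(k : {k : 'I_N | k != m}) M (val k) ((enum_val c' : cidx I m) k) (e k).
transitivity (\sum_(e : cidx J m) F e).
  apply: eq_bigr => e _; rewrite (bigD1 m) //= !fullidx_at prod_neq_sig mulrAC.
  by congr (_ * _ * _); apply: eq_bigr => k _; rewrite !fullidx_off.
by rewrite -(big_enum_val F); apply: eq_bigr => c _; rewrite !mxE.
Qed.

Lemma subtensor_mlmul (I J : 'I_N -> nat) (X : tensor R I)
    (sigma : forall k, 'I_(J k) -> 'I_(I k)) :
  subtensor X sigma =1 mlmul X (fun k => rowsub (sigma k) 1%:M).
Proof.
move=> j; pose i0 : midx I := [ffun k => sigma k (j k)].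
rewrite /mlmul (bigD1 i0) //= [s in _ + s]big1 ?addr0 => [|i /negPf ne].
  by rewrite big1 ?mul1r // => k _; rewrite !mxE ffunE eqxx.
under eq_bigr do rewrite !mxE.
rewrite prodr_natr_forall; suff /negPf -> : ~~ [forall k, sigma k (j k) == i k].
  by rewrite mul0r.
apply: contraFN ne => /forallP eqi.
by apply/eqP/ffunP => k; rewrite ffunE; apply/esym/eqP/eqi.
Qed.

End MultilinearProduct.

Section RowBasis.
Variables (F : fieldType) (m p : nat) (A : 'M[F]_(m, p)).

Definition rowbasis : {set 'I_m} := [set maxrankfun A t | t : 'I_(\rank A)].

Lemma card_rowbasis : #|rowbasis| = \rank A.
Proof. by rewrite card_imset ?cardsT ?card_ord //; apply: maxrankfun_inj. Qed.

Lemma rowbasis_span : (A <= rowsub (enum_val : 'I_#|rowbasis| -> 'I_m) A)%MS.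
Proof.
rewrite -{1}(eq_maxrowsub A); apply/row_subP => t; rewrite row_rowsub.
have ft : maxrankfun A t \in rowbasis by apply: imset_f.
by rewrite -(enum_rankK_in ft ft) -row_rowsub row_sub.
Qed.

End RowBasis.

Definition nat_entry (V : nmodType) (p q : nat) (A : 'M[V]_(p, q)) (x y : nat) : V :=
  if (insub x : option 'I_p) is Some a then
    if (insub y : option 'I_q) is Some b then A a b else 0
  else 0.

Lemma nat_entryE (V : nmodType) (p q : nat) (A : 'M[V]_(p, q)) (a : 'I_p) (b : 'I_q) :
  nat_entry A a b = A a b.
Proof. by rewrite /nat_entry !valK. Qed.

Section ModeSelection.
Variables (R : realType) (N : nat) (I : 'I_N -> nat) (n : 'I_N) (S : {set 'I_(I n)}).

Definition seldim (k : 'I_N) : nat := if k == n then #|S| else I k.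

Definition selpos (k : 'I_N) (x : nat) : nat :=
  if k == n then nth 0 [seq val i | i <- enum S] x else x.

Lemma seldim_at : seldim n = #|S|.
Proof. by rewrite /seldim eqxx. Qed.

Lemma seldim_off (k : 'I_N) : k != n -> seldim k = I k.
Proof. by rewrite /seldim => /negPf ->. Qed.

Lemma nth_val_enum (t : 'I_#|S|) : nth 0 [seq val i | i <- enum S] t = enum_val t.
Proof.
have i0 : 'I_(I n) by apply: enum_val t.
by rewrite (nth_map i0) ?(enum_val_nth i0) // -cardE.
Qed.

Lemma sorted_val_enum : sorted ltn [seq val i | i <- enum S].
Proof.
rewrite -[enum _](eq_filter (mem_enum _)) -(eq_filter (mem_map val_inj _)) -filter_map.
by rewrite (sorted_filter ltn_trans) // unlock val_ord_enum iota_ltn_sorted.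
Qed.

Lemma selpos_lt (k : 'I_N) (j : 'I_(seldim k)) : (selpos k j < I k)%N.
Proof.
rewrite /selpos; have [kn|kn] := eqVneq k n; last by rewrite -(seldim_off kn).
by subst k; move: j; rewrite seldim_at => t; rewrite nth_val_enum.
Qed.

Definition selidx (k : 'I_N) (j : 'I_(seldim k)) : 'I_(I k) := Ordinal (selpos_lt j).

Lemma selidx_at (t : 'I_#|S|) : selidx (cast_ord (esym seldim_at) t) = enum_val t.
Proof. by apply: val_inj; rewrite /= /selpos eqxx nth_val_enum. Qed.

Lemma admissible_selidx : (forall k, 0 < I k)%N -> S != set0 -> admissible selidx.
Proof.
move=> I_gt0 S0 k; have [kn|kn] := eqVneq k n; last first.
  by split=> [||a b]; rewrite ?seldim_off //= /selpos (negPf kn).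
subst k; split=> [||a b ab]; first by rewrite seldim_at card_gt0.
  by rewrite seldim_at -[leqRHS]card_ord max_card.
rewrite /= /selpos eqxx; apply: (sorted_ltn_nth ltn_trans 0%N sorted_val_enum) => //;
  by rewrite inE size_map -cardE -seldim_at ltn_ord.
Qed.

Definition selrest (i : midx I) : cidx seldim n :=
  [ffun k => cast_ord (esym (seldim_off (valP k))) (i (val k))].

Variable X : tensor R I.

Lemma subtensor_selrest (i : midx I) (b : 'I_(seldim n)) :
  subtensor X selidx (fullidx b (selrest i)) = X (fullidx (selidx b) (dropidx n i)).
Proof.
congr (X _); apply/ffunP => k; rewrite ffunE.
have [->|kn] := eqVneq k n; first by rewrite !fullidx_at.
have /= -> := fullidx_off b (selrest i) (exist _ k kn).
have /= -> := fullidx_off (selidx b) (dropidx n i) (exist _ k kn).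
by apply: val_inj; rewrite /= /selpos (negPf kn) !ffunE.
Qed.

(* Off mode [n] the factor is an identity matrix, written on values since
   ['I_(seldim k)] and ['I_(I k)] are only propositionally equal. *)
Definition expand_mx (C : 'M[R]_(I n, #|S|)) (k : 'I_N) : 'M[R]_(I k, seldim k) :=
  \matrix_(a, b) if k == n then nat_entry C a b else (a == b :> nat)%:R.

Lemma prod_expand_mx (C : 'M[R]_(I n, #|S|)) (i : midx I) (b : 'I_(seldim n))
    (e : cidx seldim n) :
  \prod_k expand_mx C k (i k) (fullidx b e k)
  = nat_entry C (i n) b * (e == selrest i)%:R.
Proof.
rewrite (bigD1 n) //= mxE eqxx fullidx_at prod_neq_sig; congr (_ * _).
under eq_bigr => k _ do rewrite mxE (negPf (valP k)) fullidx_off.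
rewrite prodr_natr_forall; congr (nat_of_bool _)%:R.
apply/idP/eqP => [/forallP eq_e|->].
  by apply/ffunP => k; apply: val_inj; rewrite ffunE /=; apply/esym/eqP/eq_e.
by apply/forallP => k; rewrite ffunE.
Qed.

Lemma expand_subtensor (C : 'M[R]_(I n, #|S|)) :
  unfolding X n = C *m rowsub (enum_val : 'I_#|S| -> 'I_(I n)) (unfolding X n) ->
  X =1 mlmul (subtensor X selidx) (expand_mx C).
Proof.
move=> defXn i; rewrite /mlmul (big_midx n).
transitivity (\sum_(b : 'I_(seldim n)) nat_entry C (i n) b *
                X (fullidx (selidx b) (dropidx n i))); last first.
  apply: eq_bigr => b _.
  rewrite (bigD1 (selrest i)) //= [s in _ + s]big1 => [|e /negPf ne].
    by rewrite prod_expand_mx eqxx mulr1 addr0 subtensor_selrest.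
  by rewrite prod_expand_mx ne mulr0 mul0r.
rewrite -{1}(dropidxK n i).
have /matrixP/(_ (i n) (enum_rank (dropidx n i))) := defXn.
rewrite !mxE enum_rankK => ->.
rewrite (reindex (cast_ord (esym seldim_at))) /=; last first.
  by exists (cast_ord seldim_at) => t _; rewrite ?cast_ordK ?cast_ordKV.
by apply: eq_bigr => t _; rewrite !mxE enum_rankK selidx_at nat_entryE.
Qed.

Lemma mode_rank_subtensor_selidx :
  (unfolding X n <= rowsub (enum_val : 'I_#|S| -> 'I_(I n)) (unfolding X n))%MS ->
  forall m, mode_rank (subtensor X selidx) m = mode_rank X m.
Proof.
case/submxP => C /expand_subtensor defX m.
apply/eqP; rewrite eqn_leq; apply/andP; split.
  by rewrite (eq_mode_rank m (subtensor_mlmul X selidx)) mode_rank_mlmul.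
by rewrite {1}(eq_mode_rank m defX) mode_rank_mlmul.
Qed.

End ModeSelection.

Lemma mode_rank_gt0 (R : realType) (N : nat) (I : 'I_N -> nat) (X : tensor R I)
    (i : midx I) (n : 'I_N) :
  X i != 0 -> (0 < mode_rank X n)%N.
Proof.
move=> Xi; rewrite lt0n mxrank_eq0; apply: contra Xi => /eqP/matrixP.
by move/(_ (i n) (enum_rank (dropidx n i))); rewrite !mxE enum_rankK dropidxK => ->.
Qed.

Lemma has_rank_subtensor_mode (R : realType) (N : nat) (I : 'I_N -> nat)
    (r : forall J : 'I_N -> nat, tensor R J -> nat) (X : tensor R I) (n : 'I_N) :
  (exists i, X i != 0) ->
  (forall J (Y : tensor R J),
     (forall m, mode_rank Y m = mode_rank X m) -> r J Y = r I X) ->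
  r I X = mode_rank X n -> has_rank_subtensor r X.
Proof.
case=> i Xi r_modes rXn; pose S := rowbasis (unfolding X n).
have eq_ranks := mode_rank_subtensor_selidx (rowbasis_span (unfolding X n)).
exists (seldim S), (@selidx _ _ _ S); split; [|split].
- apply: admissible_selidx => [k|].
    exact: leq_ltn_trans (leq0n _) (ltn_ord (i k)).
  by rewrite -card_gt0 card_rowbasis; apply: mode_rank_gt0 Xi.
- by rewrite r_modes.
- by exists n; rewrite r_modes // rXn seldim_at card_rowbasis.
Qed.

Lemma submax_mem (s : seq nat) : s != [::] -> submax s \in s.
Proof.
rewrite /submax; case: ifP => [|s_gt1 _].
  by case: s => //= a s _ _; apply: mem_head.
by rewrite -(mem_sort geq) mem_nth // size_sort ltnNge s_gt1.
Qed.

Unset Implicit Arguments.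
Set Strict Implicit.

Theorem corollary3p6 (R : realType) (N : nat) (I : 'I_N -> nat)
  (HN : (0 < N)%N) (X : tensor R I) (HX : exists i : midx I, X i != 0) :
  has_rank_subtensor (fun J (Y : tensor R J) => max_rank Y) X /\
  has_rank_subtensor (fun J (Y : tensor R J) => submax_rank Y) X.
Proof.
split.
  have N_gt0 : (0 < #|'I_N|)%N by rewrite card_ord.
  have [n0 maxX] := bigop.eq_bigmax (mode_rank X) N_gt0.
  apply: (has_rank_subtensor_mode (n := n0) HX) => // J Y eqY.
  by apply: eq_bigr => m _; apply: eqY.
have : submax_rank X \in [seq mode_rank X n | n <- enum 'I_N].
  by apply: submax_mem; rewrite -size_eq0 size_map size_enum_ord -lt0n.
case/mapP => n1 _ submaxX.
apply: (has_rank_subtensor_mode (n := n1) HX) => // J Y eqY.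
by rewrite /submax_rank (eq_map eqY).
Qed.
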